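(* Let $A\in M_n(R)$ be a definite matrix. Then $A^{\nabla}\cong_\nu A^*\cong_\nu A^{n-1}$, where $A^*=\sum_{i\geq 0}A^i$ is the Kleene star of $A$.
   Context: Supertropical semiring $R=T\cup G\cup\{-\infty\}$: $T=\mathcal G$ an ordered abelian group (tangible), $G=\{a^\nu\}$ a copy (ghost); $a+b$ is the element of larger $\nu$-value if the $\nu$-values differ and $a^\nu$ if equal; multiplication adds $\nu$-values, is ghost if a factor is ghost, $-\infty$ absorbing; $0_R=-\infty$, $1_R=0$. Matrix operations use these operations; $A^0=I$ (identity: $1_R$ on diagonal, $0_R$ off it). $A\cong_\nu B$ means entrywise equality of $\nu$-values. $\det(A)=\sum_{\sigma\in S_n}\prod_i a_{i,\sigma(i)}$; $\operatorname{adj}(A)_{i,j}=\det(A_{j,i})$ (minor deleting row $j$, column $i$); $A^\nabla=\det(A)^{-1}\operatorname{adj}(A)$ when $\det(A)\in T$. A matrix is definite if all diagonal entries are $1_R$ and $\det(A)=1_R$. *)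

From HB Require Import structures.
From mathcomp Require Import all_boot all_order ssralg fingroup perm matrix.
Set Implicit Arguments. Unset Strict Implicit. Unset Printing Implicit Defensive.
Import Order.TTheory GRing.Theory.

HB.mixin Record isOrderedAbGroup d (G : Type) of Order.Total d G & GRing.Zmodule G := {
  oag_leD2r : forall x y z : G, (x <= y)%O -> ((x + z)%R <= (y + z)%R)%O }.
#[short(type="orderedAbGroupType")]
HB.structure Definition OrderedAbGroup d :=
  { G of isOrderedAbGroup d G & Order.Total d G & GRing.Zmodule G }.

Section Supertropical.
Variables (d : Order.disp_t) (G : orderedAbGroupType d).

(* R = T ∪ G ∪ {-oo} : Ninf = -oo = 0_R, Tan a = tangible a, Gh a = ghost a^nu *)
Inductive st := Ninf | Tan of G | Gh of G.

(* nu-value: None stands for -oo *)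
Definition nu (x : st) : option G :=
  match x with Ninf => None | Tan a => Some a | Gh a => Some a end.

Definition splus (x y : st) : st :=
  match x, y with
  | Ninf, _ => y
  | _, Ninf => x
  | (Tan a | Gh a), (Tan b | Gh b) =>
      if (a < b)%O then y else if (b < a)%O then x else Gh a
  end.

Definition smul (x y : st) : st :=
  match x, y with
  | Ninf, _ => Ninf
  | _, Ninf => Ninf
  | Tan a, Tan b => Tan (a + b)%R
  | Tan a, Gh b | Gh a, Tan b | Gh a, Gh b => Gh (a + b)%R
  end.

Definition one_st : st := Tan 0%R.   (* 1_R = 0 *)

Definition nu_mx_eq m n (A B : 'M[st]_(m, n)) : Prop :=
  forall i j, nu (A i j) = nu (B i j).

Definition smx_add n (A B : 'M[st]_n) : 'M[st]_n :=
  \matrix_(i, j) splus (A i j) (B i j).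

Definition smx_mul n (A B : 'M[st]_n) : 'M[st]_n :=
  \matrix_(i, j) \big[splus/Ninf]_(k < n) smul (A i k) (B k j).

Definition smx_id n : 'M[st]_n := \matrix_(i, j) if i == j then one_st else Ninf.

Fixpoint smx_pow n (A : 'M[st]_n) (k : nat) : 'M[st]_n :=
  match k with 0 => smx_id n | k'.+1 => smx_mul (smx_pow A k') A end.

Definition sdet n (A : 'M[st]_n) : st :=
  \big[splus/Ninf]_(s : 'S_n) \big[smul/one_st]_(i < n) A i (s i).

Definition sadj n (A : 'M[st]_n) : 'M[st]_n :=
  \matrix_(i, j) sdet (col' i (row' j A)).

(* A^nabla = det(A)^{-1} adj(A), meaningful when det(A) is tangible *)
Definition snabla n (A : 'M[st]_n) : 'M[st]_n :=
  match sdet A with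
  | Tan a => \matrix_(i, j) smul (Tan (- a)%R) (sadj A i j)
  | _ => sadj A
  end.

Definition definite n (A : 'M[st]_n) : Prop :=
  (forall i, A i i = one_st) /\ sdet A = one_st.

Fixpoint kleene_psum n (A : 'M[st]_n) (m : nat) : 'M[st]_n :=
  match m with 0 => smx_id n | m'.+1 => smx_add (kleene_psum A m') (smx_pow A m) end.

Definition kleene_star n (A : 'M[st]_n) (S : 'M[st]_n) : Prop :=
  exists N, forall m, (N <= m)%N -> kleene_psum A m = S.

End Supertropical.

(* Only nu-values matter, and they live in G u {-oo}, where
   supertropical products become sums and supertropical sums become maxima.
   Read A as a digraph with arc weights nu(a_ij): then nu((A^k)_ij) is the
   maximal weight of a walk of length k from i to j, and nu(adj(A)_ij) is the
   maximal weight of a permutation term with sigma(j) = i and row j removed.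
   Definiteness says that the loops weigh 0 and every permutation weighs <= 0.
   - Every simple path from i to j is such a permutation term (close it by
     the identity), and every closed walk weighs <= 0 (split it into simple
     cycles, each bounded by adj(A)_xy * a_yx <= det A).  Removing closed
     subwalks, every walk is bounded by adj(A): nu(A^k) <= nu(adj A).
   - Conversely, an optimal term of adj(A)_ij is the simple path from i to j
     along the cycle of sigma through i, plus an off-cycle part of weight
     <= 0.  That path has length <= n-1, and the zero loops make nu(A^k)
     nondecreasing in k, so nu(adj A) <= nu(A^(n-1)).
   Hence nu(A^k) = nu(adj A) for all k >= n-1, the partial sums of the
   Kleene star stabilise to the ghost matrix of nu(A^(n-1)), and det A = 1
   gives A^nabla = adj A. *)

From HB Require Import structures.
From mathcomp Require Import all_boot all_order ssralg fingroup perm matrix.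
From mathcomp Require Import zify.
Set Implicit Arguments. Unset Strict Implicit. Unset Printing Implicit Defensive.
Import Order.TTheory GRing.Theory.

Section NuValues.
Variables (d : Order.disp_t) (G : orderedAbGroupType d).
Local Notation val := (option G).

Definition vle (a b : val) : bool :=
  match a, b with
  | None, _ => true
  | Some _, None => false
  | Some x, Some y => (x <= y)%O
  end.

Definition vmul (a b : val) : val :=
  match a, b with Some x, Some y => Some (x + y)%R | _, _ => None end.

Lemma vmulA : associative vmul.
Proof. by case=> [a|] [b|] [c|] //=; rewrite addrA. Qed.

Lemma vmulC : commutative vmul.
Proof. by case=> [a|] [b|] //=; rewrite addrC. Qed.

Lemma vmul1 : left_id (Some 0%R) vmul.
Proof. by case=> [a|] //=; rewrite add0r. Qed.

HB.instance Definition _ :=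
  Monoid.isComLaw.Build val (Some 0%R) vmul vmulA vmulC vmul1.

Lemma vle_refl a : vle a a.
Proof. by case: a => //= a. Qed.

Lemma vle_trans a b c : vle a b -> vle b c -> vle a c.
Proof. by case: a => [a|] //; case: b => [b|] //; case: c => [c|] //=; apply: le_trans. Qed.

Lemma vle_anti a b : vle a b -> vle b a -> a = b.
Proof. by case: a => [a|]; case: b => [b|] //= h1 h2; rewrite (@le_anti _ _ a b) ?h1. Qed.

Lemma vle_mul2r a b c : vle a b -> vle (vmul a c) (vmul b c).
Proof. by case: a => [a|] //; case: b => [b|] //; case: c => [c|] //=; apply: oag_leD2r. Qed.

Lemma vle_mul2l a b c : vle a b -> vle (vmul c a) (vmul c b).
Proof. by rewrite ![vmul c _]vmulC; apply: vle_mul2r. Qed.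

Lemma vmul_le1 a b : vle a (Some 0%R) -> vle (vmul b a) b.
Proof. by move=> h; have := vle_mul2l b h; rewrite [vmul b (Some 0%R)]vmulC vmul1. Qed.

End NuValues.
Arguments vle {d G}.
Arguments vmul {d G}.

Section SupertropicalSums.
Variables (d : Order.disp_t) (G : orderedAbGroupType d).
Local Notation st := (st G).
Local Notation "\ssum_ ( i <- r | P ) F" := (\big[@splus _ G/Ninf G]_(i <- r | P) F)
  (at level 41, F at level 41, i, r at level 50).

Lemma smulA : associative (@smul d G).
Proof. by case=> [|a|a] [|b|b] [|c|c] //=; rewrite addrA. Qed.

Lemma smulC : commutative (@smul d G).
Proof. by case=> [|a|a] [|b|b] //=; rewrite addrC. Qed.

Lemma smul1 : left_id (one_st G) (@smul d G).
Proof. by case=> [|a|a] //=; rewrite add0r. Qed.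

HB.instance Definition _ :=
  Monoid.isComLaw.Build st (one_st G) (@smul d G) smulA smulC smul1.

Lemma nu_smul (x y : st) : nu (smul x y) = vmul (nu x) (nu y).
Proof. by case: x => [|a|a]; case: y => [|b|b]. Qed.

Lemma nu_prod (I : Type) (r : seq I) (P : pred I) (F : I -> st) :
  nu (\big[@smul _ G/one_st G]_(i <- r | P i) F i) =
  \big[vmul/Some 0%R]_(i <- r | P i) nu (F i).
Proof. by apply: (big_morph (@nu d G)); [exact: nu_smul | by []]. Qed.

Lemma nu_splus (x y : st) :
  [/\ vle (nu x) (nu (splus x y)), vle (nu y) (nu (splus x y)) &
      nu (splus x y) = nu x \/ nu (splus x y) = nu y].
Proof.
case: x => [|a|a]; case: y => [|b|b] /=; rewrite ?lexx; try by split => //; auto.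
all: by case: (ltgtP a b) => [h|h|<-] /=; rewrite ?lexx ?(ltW h); split => //; auto.
Qed.

Lemma splus_nu_eq (x y : st) : nu x = nu y ->
  splus x y = match nu x with Some a => Gh a | None => Ninf G end.
Proof. by case: x => [|a|a]; case: y => [|b|b] //= [<-]; rewrite ltxx. Qed.

Lemma nu_sum_ge (I : eqType) (r : seq I) (P : pred I) (F : I -> st) i :
  i \in r -> P i -> vle (nu (F i)) (nu (\ssum_(j <- r | P j) F j)).
Proof.
elim: r => [|k r IH] //; rewrite inE big_cons => /orP [/eqP<- ->|ir Pi].
  by case: (nu_splus (F i) (\ssum_(j <- r | P j) F j)).
case: ifP => _; last exact: IH.
case: (nu_splus (F k) (\ssum_(j <- r | P j) F j)) => _ h _.
exact: vle_trans (IH ir Pi) h.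
Qed.

Lemma nu_sum_attained (I : eqType) (r : seq I) (P : pred I) (F : I -> st) :
  nu (\ssum_(j <- r | P j) F j) = None \/
  exists2 i, (i \in r) && P i & nu (\ssum_(j <- r | P j) F j) = nu (F i).
Proof.
elim: r => [|k r IH]; first by rewrite big_nil; left.
rewrite big_cons; case: ifP => Pk.
  case: (nu_splus (F k) (\ssum_(j <- r | P j) F j)) => _ _ [->|->].
    by right; exists k; rewrite ?inE ?eqxx ?Pk.
  case: IH => [->|[i /andP[ir Pi] ->]]; first by left.
  by right; exists i; rewrite // inE ir orbT.
case: IH => [->|[i /andP[ir Pi] ->]]; first by left.
by right; exists i; rewrite // inE ir orbT.
Qed.

Lemma nu_fsum_ge (I : finType) (F : I -> st) i :
  vle (nu (F i)) (nu (\big[@splus _ G/Ninf G]_(j : I) F j)).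
Proof. exact: (@nu_sum_ge I (index_enum I) predT F i (mem_index_enum i) isT). Qed.

Lemma nu_fsum_attained (I : finType) (F : I -> st) :
  nu (\big[@splus _ G/Ninf G]_(j : I) F j) = None \/
  exists i, nu (\big[@splus _ G/Ninf G]_(j : I) F j) = nu (F i).
Proof.
by case: (@nu_sum_attained I (index_enum I) predT F) => [->|[i _ ->]];
  [left | right; exists i].
Qed.

Lemma snabla_det1 n (A : 'M[st]_n) : sdet A = one_st G -> nu_mx_eq (snabla A) (sadj A).
Proof.
move=> detA i j; rewrite /snabla detA mxE nu_smul.
by case: (nu (sadj A i j)) => //= a; rewrite oppr0 add0r.
Qed.

End SupertropicalSums.

Lemma not_uniq_split (T : eqType) (s : seq T) : ~~ uniq s ->
  exists a z b c, s = a ++ z :: b ++ z :: c.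
Proof.
elim: s => [|y s IH] //=; rewrite negb_and negbK => /orP [ys|/IH [a [z [b [c ->]]]]].
  by case/splitPr: ys => b c; exists [::], y, b, c.
by exists (y :: a), z, b, c.
Qed.

Section Walks.
Variables (d : Order.disp_t) (G : orderedAbGroupType d) (n : nat).
Variable A : 'M[st G]_n.+1.
Local Notation I := 'I_n.+1.
Local Notation w u v := (nu (A u v)).
Local Notation P k := (smx_pow A k).

(* Weight of the walk x -> p_1 -> ... -> p_k in the digraph of A. *)
Fixpoint walk_weight (x : I) (p : seq I) : option G :=
  match p with [::] => Some 0%R | y :: p' => vmul (w x y) (walk_weight y p') end.

Lemma walk_weight_cat x p q :
  walk_weight x (p ++ q) = vmul (walk_weight x p) (walk_weight (last x p) q).
Proof.
elim: p x => [|y p IH] x; first by rewrite cat0s vmul1.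
by rewrite /= IH vmulA.
Qed.

Lemma walk_weight_rcons x p y :
  walk_weight x (rcons p y) = vmul (walk_weight x p) (w (last x p) y).
Proof.
rewrite -cats1 walk_weight_cat /=.
by case: (w _ y) => //= a; rewrite addr0.
Qed.

Lemma walk_weight_loop x a b c : last (last x a) b = last x a ->
  walk_weight x (a ++ b ++ c) =
  vmul (walk_weight x (a ++ c)) (walk_weight (last x a) b).
Proof.
move=> closed_b; rewrite !walk_weight_cat closed_b.
by rewrite -!vmulA [vmul (walk_weight _ b) _]vmulC.
Qed.

Lemma walk_loop_split (x : I) p : ~~ uniq (x :: p) ->
  exists a b c, [/\ p = a ++ b ++ c, size b > 0 & last (last x a) b = last x a].
Proof.
case/not_uniq_split=> [[|y a] [z [b [c /= [xz ->]]]]].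
  by rewrite xz; exists [::], (rcons b z), c; rewrite size_rcons last_rcons cat_rcons.
exists (rcons a z), (rcons b z), c.
by rewrite size_rcons !last_rcons !cat_rcons.
Qed.

Lemma smx_powS k i j :
  P k.+1 i j = \big[@splus _ G/Ninf G]_(l < n.+1) smul (P k i l) (A l j).
Proof. by rewrite /= /smx_mul mxE. Qed.

Lemma walk_le_pow i p : vle (walk_weight i p) (nu (P (size p) i (last i p))).
Proof.
elim/last_ind: p => [|p y IH]; first by rewrite /= /smx_id mxE eqxx /= lexx.
rewrite size_rcons last_rcons walk_weight_rcons smx_powS.
apply: vle_trans _ (nu_fsum_ge (fun l => smul (P (size p) i l) (A l y)) (last i p)).
by rewrite nu_smul; apply: vle_mul2r.
Qed.

Lemma pow_attained i k j : nu (P k i j) = None \/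
  exists p, [/\ size p = k, last i p = j & nu (P k i j) = walk_weight i p].
Proof.
elim: k j => [|k IH] j.
  rewrite /= /smx_id mxE; case: eqP => [<-|_]; last by left.
  by right; exists [::].
rewrite smx_powS.
case: (nu_fsum_attained (fun l => smul (P k i l) (A l j))) => [->|[l ->]]; first by left.
rewrite nu_smul; case: (IH l) => [->|[p [sp lp ->]]]; first by left.
by right; exists (rcons p j); rewrite size_rcons last_rcons walk_weight_rcons lp sp.
Qed.

Definition cofactor_term (S : 'S_n.+1) (y : I) : st G :=
  \big[@smul _ G/one_st G]_(r | y != r) A r (S r).

Lemma minor_term (x y : I) (s : 'S_n) :
  \big[@smul _ G/one_st G]_(k < n) (col' x (row' y A)) k (s k) =
  cofactor_term (lift_perm y x s) y.
Proof.
rewrite /cofactor_term; case: (pickP 'I_n) => [k0 _ | n0]; last first.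
  by rewrite !big1 // => [j /unlift_some[i] | i _]; have:= n0 i.
rewrite (reindex (lift y)).
  by apply: eq_big => [k | k _] /=; rewrite ?neq_lift // !mxE lift_perm_lift.
exists (fun k => odflt k0 (unlift y k)) => k; first by rewrite liftK.
by case/unlift_some=> k' -> ->.
Qed.

Lemma cofactor_term_le_adj x y (S : 'S_n.+1) :
  S y = x -> vle (nu (cofactor_term S y)) (nu (sadj A x y)).
Proof.
move=> Syx.
pose f k := odflt k (unlift x (S (lift y k))).
have fK k : lift x (f k) = S (lift y k).
  rewrite /f; have : x != S (lift y k) by rewrite -Syx (inj_eq perm_inj) neq_lift.
  by case/unlift_some => k' -> ->.
have finj : injective f.
  by move=> k1 k2 /(congr1 (lift x)); rewrite !fK => /perm_inj /lift_inj.
have -> : S = lift_perm y x (perm finj).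
  apply/permP => r; case: (unliftP y r) => [k|] ->; last by rewrite lift_perm_id.
  by rewrite lift_perm_lift permE fK.
rewrite -minor_term /sadj mxE /sdet.
exact: (nu_fsum_ge (fun s : 'S_n =>
  \big[@smul _ G/one_st G]_(k < n) (col' x (row' y A)) k (s k))).
Qed.

Lemma adj_attained x y : nu (sadj A x y) = None \/
  exists2 S : 'S_n.+1, S y = x & nu (sadj A x y) = nu (cofactor_term S y).
Proof.
rewrite /sadj mxE /sdet.
case: (nu_fsum_attained (fun s : 'S_n =>
  \big[@smul _ G/one_st G]_(k < n) (col' x (row' y A)) k (s k))) => [->|[s ->]].
  by left.
by right; exists (lift_perm y x s); rewrite ?lift_perm_id ?minor_term.
Qed.

Lemma walk_weight_path (S : 'S_n.+1) x q : path (frel S) x q ->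
  walk_weight x q = \big[vmul/Some 0%R]_(r <- belast x q) w r (S r).
Proof.
elim: q x => [|y q IH] x /=; first by rewrite big_nil.
by move=> /andP[/eqP <- h]; rewrite big_cons IH.
Qed.

Lemma cofactor_term_split (S : 'S_n.+1) x q : uniq (x :: q) -> path (frel S) x q ->
  nu (cofactor_term S (last x q)) =
  vmul (walk_weight x q) (\big[vmul/Some 0%R]_(r | r \notin x :: q) w r (S r)).
Proof.
move=> U pth; rewrite /cofactor_term nu_prod (bigID (fun r => r \in belast x q)) /=.
move: U; rewrite lastI rcons_uniq => /andP[yb ub].
congr vmul.
  rewrite (walk_weight_path pth) (big_uniq _ ub); apply: eq_bigl => r.
  case: (boolP (r \in belast x q)) => rb; rewrite ?andbT ?andbF //.
  by apply: contraNneq _ yb => ->.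
by apply: eq_bigl => r; rewrite mem_rcons inE negb_or eq_sym.
Qed.

End Walks.

Section DefiniteMatrix.
Variables (d : Order.disp_t) (G : orderedAbGroupType d) (n : nat).
Variable A : 'M[st G]_n.+1.
Hypothesis definiteA : definite A.
Local Notation I := 'I_n.+1.
Local Notation w u v := (nu (A u v)).
Local Notation P k := (smx_pow A k).
Local Notation walk_weight := (walk_weight A).
Local Notation nu1 := (Some 0%R : option G).

Lemma loop_weight x : w x x = nu1.
Proof. by case: definiteA => diagA _; rewrite diagA. Qed.

Lemma perm_weight_le1 (S : 'S_n.+1) :
  vle (nu (\big[@smul _ G/one_st G]_(i < n.+1) A i (S i))) nu1.
Proof.
case: definiteA => _ detA.
apply: vle_trans (nu_fsum_ge (fun S : 'S_n.+1 =>
  \big[@smul _ G/one_st G]_(i < n.+1) A i (S i)) S) _.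
have -> : nu1 = nu (sdet A) by rewrite detA.
exact: vle_refl.
Qed.

(* The zero loops make the powers nu-increasing. *)
Lemma pow_le_succ k i j : vle (nu (P k i j)) (nu (P k.+1 i j)).
Proof.
rewrite smx_powS; apply: vle_trans _ (nu_fsum_ge (fun l => smul (P k i l) (A l j)) j).
by rewrite nu_smul loop_weight [vmul _ nu1]vmulC vmul1 vle_refl.
Qed.

Lemma pow_le_mono k m i j : k <= m -> vle (nu (P k i j)) (nu (P m i j)).
Proof.
move=> /subnKC <-; elim: (m - k) => [|e IH]; first by rewrite addn0 vle_refl.
by apply: vle_trans IH _; rewrite addnS; apply: pow_le_succ.
Qed.

(* adj(A)_xy * a_yx is dominated by det A. *)
Lemma adj_mul_le1 x y : vle (vmul (nu (sadj A x y)) (w y x)) nu1.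
Proof.
case: (adj_attained A x y) => [->|[S Syx ->]] //.
have E : \big[@smul _ G/one_st G]_(i < n.+1) A i (S i) =
         smul (A y (S y)) (cofactor_term A S y).
  by rewrite (bigD1 y) //= /cofactor_term; congr smul; apply: eq_bigl => r; rewrite eq_sym.
by rewrite -Syx -nu_smul smulC -E; exact: perm_weight_le1.
Qed.

(* A simple path from x is completed into a permutation by the cycle it
   closes and the identity elsewhere, so it is bounded by adj(A). *)
Lemma simple_walk_le_adj x q : uniq (x :: q) ->
  vle (walk_weight x q) (nu (sadj A x (last x q))).
Proof.
move=> U.
pose S := perm (can_inj (prev_next U)).
have SE r : S r = next (x :: q) r by rewrite permE.
have := cycle_next U; rewrite /= rcons_path => /andP[pq /eqP Slast].
have pth : path (frel S) x q.
  by rewrite (@eq_path _ _ (frel (next (x :: q)))) // => a b /=; rewrite SE.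
apply: vle_trans _ (cofactor_term_le_adj A (etrans (SE _) Slast)).
rewrite (cofactor_term_split A U pth) big1 => [|r rn]; last first.
  by rewrite SE next_nth (negbTE rn) loop_weight.
by rewrite [vmul _ nu1]vmulC vmul1 vle_refl.
Qed.

(* Every closed walk weighs at most 0: cut it into simple cycles. *)
Lemma closed_walk_le1 (x : I) (p : seq I) :
  last x p = x -> vle (walk_weight x p) nu1.
Proof.
have [k] := ubnP (size p); elim: k x p => // k IH x p ltpk.
case/lastP: p ltpk => [|q y] ltpk; first by rewrite /= lexx.
rewrite last_rcons => Ey; subst y.
have [U|/walk_loop_split[a [b [c [q_split b0 loop_b]]]]] := boolP (uniq (x :: q)).
  rewrite walk_weight_rcons; apply: vle_trans (adj_mul_le1 x (last x q)).
  by apply: vle_mul2r; apply: simple_walk_le_adj.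
rewrite {}q_split in ltpk *; move: ltpk; rewrite !rcons_cat !size_cat size_rcons => ltpk.
rewrite walk_weight_loop //.
have lt_ac : size (a ++ rcons c x) < k by rewrite size_cat size_rcons; lia.
have lt_b : size b < k by lia.
apply: vle_trans (vmul_le1 _ (IH _ _ lt_b loop_b)) _.
by apply: IH lt_ac _; rewrite last_cat last_rcons.
Qed.

(* Removing closed subwalks, every walk is dominated by a simple path with
   the same endpoints. *)
Lemma walk_simplify (x : I) (p : seq I) : exists2 q, uniq (x :: q) &
  last x q = last x p /\ vle (walk_weight x p) (walk_weight x q).
Proof.
have [k] := ubnP (size p); elim: k x p => // k IH x p ltpk.
have [U|/walk_loop_split[a [b [c [p_split b0 loop_b]]]]] := boolP (uniq (x :: p)).
  by exists p => //; split; rewrite ?vle_refl.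
move: ltpk; rewrite p_split !size_cat => ltpk.
have [|q U [lq le_q]] := IH x (a ++ c); first by rewrite size_cat; lia.
exists q => //; split; first by rewrite lq !last_cat loop_b.
rewrite walk_weight_loop //; apply: vle_trans le_q.
exact: vmul_le1 (closed_walk_le1 loop_b).
Qed.

Lemma walk_le_adj x p : vle (walk_weight x p) (nu (sadj A x (last x p))).
Proof.
have [q U [<- le_q]] := walk_simplify x p.
exact: vle_trans le_q (simple_walk_le_adj U).
Qed.

Lemma pow_le_adj k i j : vle (nu (P k i j)) (nu (sadj A i j)).
Proof. by case: (pow_attained A i k j) => [->|[p [_ <- ->]]] //; apply: walk_le_adj. Qed.

Lemma perm_cycle_path (S : 'S_n.+1) i j : S j = i ->
  exists q, [/\ fingraph.orbit S i = i :: q, path (frel S) i q & last i q = j].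
Proof.
move=> Sji; have ord_gt0 := fingraph.order_gt0 S i.
exists (traject S (S i) (fingraph.order S i).-1); split.
- by rewrite /fingraph.orbit -{1}(prednK ord_gt0) trajectS.
- exact: fpath_traject.
- apply: (@perm_inj _ S); rewrite last_traject -iterS prednK // Sji.
  exact: fingraph.iter_order perm_inj i.
Qed.

(* The factors of a permutation outside one of its cycles weigh at most 0:
   replacing that cycle by fixed points gives another permutation. *)
Lemma off_orbit_le1 (S : 'S_n.+1) i :
  vle (\big[vmul/nu1]_(r | r \notin fingraph.orbit S i) w r (S r)) nu1.
Proof.
have closedC r : r \notin fingraph.orbit S i -> S r \notin fingraph.orbit S i.
  rewrite -!fconnect_orbit; apply: contra => h.
  by apply: connect_trans h _; rewrite fconnect_sym ?fconnect1 //; exact: perm_inj.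
pose tau r := if r \in fingraph.orbit S i then r else S r.
have tau_inj : injective tau.
  move=> r1 r2; rewrite /tau; case: ifP => h1; case: ifP => h2 //.
  - by move=> E; move: (closedC r2 (negbT h2)); rewrite -E h1.
  - by move=> E; move: (closedC r1 (negbT h1)); rewrite E h2.
  - exact: perm_inj.
have := perm_weight_le1 (perm tau_inj).
rewrite nu_prod (bigID (fun r => r \in fingraph.orbit S i)) /=.
rewrite big1 => [|r rC]; last by rewrite permE /tau rC loop_weight.
rewrite vmul1; congr (is_true (vle _ _)).
by apply: eq_bigr => r rC; rewrite permE /tau (negbTE rC).
Qed.

(* An optimal term of adj(A)_ij is a simple path from i to j, of length at
   most n, times off-cycle factors of weight <= 0. *)
Lemma adj_le_pow i j : vle (nu (sadj A i j)) (nu (P n i j)).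
Proof.
case: (adj_attained A i j) => [->|[S Sji ->]] //.
have [q [orbitE pth lq]] := perm_cycle_path Sji.
have U : uniq (i :: q) by rewrite -orbitE fingraph.orbit_uniq.
have size_q : size q <= n.
  by have := max_card (mem (i :: q)); rewrite card_ord (card_uniqP U).
rewrite -{1}lq (cofactor_term_split A U pth) -orbitE.
apply: vle_trans (vmul_le1 _ (off_orbit_le1 S i)) _.
apply: vle_trans (walk_le_pow A i q) _; rewrite lq.
exact: pow_le_mono.
Qed.

End DefiniteMatrix.

Section KleeneStar.
Variables (d : Order.disp_t) (G : orderedAbGroupType d).

Definition ghost_mx n (B : 'M[st G]_n) : 'M[st G]_n :=
  \matrix_(i, j) match nu (B i j) with Some a => Gh a | None => Ninf G end.

Lemma nu_ghost_mx n (B : 'M[st G]_n) i j : nu (ghost_mx B i j) = nu (B i j).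
Proof. by rewrite mxE; case: (nu (B i j)). Qed.

Variables (n : nat) (A : 'M[st G]_n.+1).
Hypothesis definiteA : definite A.
Local Notation P k := (smx_pow A k).

(* For A of size n+1: nu(adj A) = nu(A^n), and the powers of A are
   nu-constant from A^n on. *)
Lemma adj_nu_pow i j : nu (sadj A i j) = nu (P n i j).
Proof. by apply: vle_anti; [exact: adj_le_pow | exact: pow_le_adj]. Qed.

Lemma pow_nu_stable k i j : n <= k -> nu (P k i j) = nu (P n i j).
Proof.
move=> le_nk; apply: vle_anti; last exact: pow_le_mono.
by rewrite -adj_nu_pow; apply: pow_le_adj.
Qed.

(* Each partial sum of the Kleene star is bounded by adj(A) and dominates
   its top power, so it is nu-constant from m = n on. *)
Lemma psum_nu_stable m i j : n <= m -> nu (kleene_psum A m i j) = nu (P n i j).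
Proof.
move=> le_nm; apply: vle_anti.
  rewrite -adj_nu_pow; elim: m {le_nm} => [|m IH]; first exact: (pow_le_adj _ 0).
  rewrite /= /smx_add mxE.
  by case: (nu_splus (kleene_psum A m i j) (P m.+1 i j)) => _ _ [->|->] //; apply: pow_le_adj.
have -> : nu (P n i j) = nu (P m i j) by rewrite [RHS]pow_nu_stable.
case: m le_nm => [|m] _; first exact: vle_refl.
by rewrite /= /smx_add mxE; case: (nu_splus (kleene_psum A m i j) (P m.+1 i j)).
Qed.

(* From m = n+1 on, each partial sum adds two terms of equal nu-value,
   which yields the ghost matrix of A^n. *)
Lemma kleene_star_ghost : kleene_star A (ghost_mx (P n)).
Proof.
exists n.+1 => -[|m] // lt_nm; apply/matrixP => i j.
rewrite [LHS]/= /smx_add mxE splus_nu_eq; last first.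
  by rewrite psum_nu_stable // (@pow_nu_stable m.+1) // ltnW.
by rewrite psum_nu_stable // mxE.
Qed.

End KleeneStar.

Theorem proposition3p7 (d : Order.disp_t) (G : orderedAbGroupType d) (n : nat)
    (A : 'M[st G]_n) :
  definite A ->
  exists S : 'M[st G]_n,
    kleene_star A S /\ nu_mx_eq (snabla A) S /\ nu_mx_eq S (smx_pow A n.-1).
Proof.
case: n A => [|n] A definiteA.
  exists A; split; last by split => -[].
  by exists 0 => m _; apply/matrixP => -[].
exists (ghost_mx (smx_pow A n)); split; first exact: kleene_star_ghost.
split => i j; rewrite nu_ghost_mx //.
by rewrite (snabla_det1 definiteA.2) adj_nu_pow.
Qed.
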